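(* Let $m\ge1$, let $f_1,\dots,f_m$ be real numbers, let $\lambda_{i0}\ge0$ for $i=1,\dots,m$, and let $\lambda_{ij}=\lambda_{ji}\ge0$ for $1\le i<j\le m$. Consider the flow network with vertex set $V=U\cup W\cup\{r,s\}$, where $U=\{u_1,\dots,u_m\}$, $W=\{w_{ij}:1\le i<j\le m\}$, $r$ is the source and $s$ the sink; directed edge set $E=\{(r,u_i)\}_{i=1}^m\cup\{(u_i,s)\}_{i=1}^m\cup\{(u_i,w_{jk}): i\in\{j,k\},\ 1\le j<k\le m\}\cup\{(w_{ij},s):1\le i<j\le m\}$; and capacities $c(r,u_i)=|f_i|$, $c(u_i,s)=\lambda_{i0}$ for $i=1,\dots,m$, $c(u_i,w_{ij})=c(u_j,w_{ij})=\lambda_{ij}$ and $c(w_{ij},s)=\lambda_{ij}$ for $1\le i<j\le m$, with $c(v,v')=0$ whenever $(v',v)\in E$ but $(v,v')\notin E$. If the maximum value of a flow from $r$ to $s$ on this network equals $\sum_{i=1}^m|f_i|$, then there exist real numbers $\xi_{i0}\in[-\lambda_{i0},\lambda_{i0}]$ for $i=1,\dots,m$ and $\xi_{ij},\xi_{ji}\in[-\lambda_{ij},\lambda_{ij}]$ for $1\le i<j\le m$ with $|\xi_{ij}|+|\xi_{ji}|\le\lambda_{ij}$, such that $$f_i+\xi_{i0}+\sum_{j\in\{1,\dots,m\}\setminus\{i\}}\xi_{ij}=0,\qquad i=1,\dots,m.$$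
   Context: A flow on a network is defined on the set of edges together with their reversals: it is a family $\tau=\{\tau_{vv'}\}$ of reals indexed by ordered pairs $(v,v')$ with $(v,v')\in E$ or $(v',v)\in E$, satisfying skew symmetry $\tau_{vv'}=-\tau_{v'v}$; capacity constraint $\tau_{vv'}\le c(v,v')$; and flow conservation $\sum_{v'}\tau_{vv'}=0$ at every vertex $v\notin\{r,s\}$. Its value is the net flow out of the source $r$; the maximum flow value is the maximum of the value over all flows. *)

From mathcomp Require Import all_boot all_order all_algebra.
From mathcomp Require Import reals.
Set Implicit Arguments. Unset Strict Implicit. Unset Printing Implicit Defensive.
Import Order.TTheory GRing.Theory Num.Theory.
Local Open Scope ring_scope.

Section Flows.
Variables (R : realFieldType) (V : finType) (E : rel V) (c : V -> V -> R) (r s : V).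

Definition adj (v v' : V) : bool := E v v' || E v' v.

Definition is_flow (tau : V -> V -> R) : Prop :=
  [/\ (forall v v', adj v v' -> tau v v' = - tau v' v),
      (forall v v', adj v v' -> tau v v' <= c v v') &
      (forall v, v != r -> v != s -> \sum_(v' | adj v v') tau v v' = 0)].

Definition flow_value (tau : V -> V -> R) : R := \sum_(v' | adj r v') tau r v'.

Definition is_max_flow_value (x : R) : Prop :=
  (exists2 tau, is_flow tau & flow_value tau = x) /\
  (forall tau, is_flow tau -> flow_value tau <= x).
End Flows.

Definition Wt (m : nat) := {p : 'I_m * 'I_m | (p.1 < p.2)%N}.
(* vertices: inl (inl true) = r, inl (inl false) = s, inl (inr i) = u_i, inr w = w_ij *)
Definition vtx (m : nat) : finType := ((bool + 'I_m) + Wt m)%type.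

Definition src (m : nat) : vtx m := inl (inl true).
Definition snk (m : nat) : vtx m := inl (inl false).

Definition net_edge (m : nat) (v v' : vtx m) : bool :=
  match v, v' with
  | inl (inl true), inl (inr _) => true
  | inl (inr _), inl (inl false) => true
  | inl (inr i), inr w => (i == (sval w).1) || (i == (sval w).2)
  | inr _, inl (inl false) => true
  | _, _ => false
  end.

Definition net_cap (R : realFieldType) (m : nat) (f lam0 : 'I_m -> R)
  (lam : 'I_m -> 'I_m -> R) (v v' : vtx m) : R :=
  if net_edge v v' then
    match v, v' with
    | inl (inl true), inl (inr i) => `|f i|
    | inl (inr i), inl (inl false) => lam0 i
    | inl (inr _), inr w => lam (sval w).1 (sval w).2
    | inr w, inl (inl false) => lam (sval w).1 (sval w).2
    | _, _ => 0
    end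
  else 0.

From mathcomp Require Import all_boot all_order all_algebra.
From mathcomp Require Import reals.
From mathcomp Require Import ring lra.
Set Implicit Arguments. Unset Strict Implicit. Unset Printing Implicit Defensive.
Import Order.TTheory GRing.Theory Num.Theory.
Local Open Scope ring_scope.

(* Let tau be a maximum flow; its value is sum_i |f_i|, and since
   the only edges leaving the source r are the (r,u_i), of capacities |f_i|,
   every one of them is saturated: tau(r,u_i) = |f_i|.  Conservation at u_i
   then reads
       |f_i| = tau(u_i,s) + sum_{j <> i} tau(u_i,w_ij),
   all terms on the right being nonnegative (reverse capacities are 0).
   Conservation at w_ij together with c(w_ij,s) = lam_ij gives
   tau(u_i,w_ij) + tau(u_j,w_ij) <= lam_ij.  Multiplying the balance at u_i
   by -sg(f_i) yields the required xi's. *)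

Section FlowFacts.
Variables (R : realFieldType) (V : finType) (E : rel V) (c : V -> V -> R) (r s : V).
Variable tau : V -> V -> R.
Hypothesis tau_flow : is_flow E c r s tau.

Lemma adj_sym v v' : adj E v v' -> adj E v' v.
Proof. by rewrite /adj orbC. Qed.

(* Skew symmetry turns the capacity of (v',v) into a lower bound on (v,v'). *)
Lemma flow_ge_opp_cap v v' : adj E v v' -> - c v' v <= tau v v'.
Proof.
case: tau_flow => skew cap _ avv'.
by rewrite (skew _ _ avv') lerN2 cap // adj_sym.
Qed.

Lemma flow_saturates_source :
  flow_value E r tau = \sum_(v | adj E r v) c r v ->
  forall v, adj E r v -> tau r v = c r v.
Proof.
case: tau_flow => _ cap _ val v arv; apply/eqP; rewrite eq_sym -subr_eq0; apply/eqP.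
have slack0 : \sum_(v | adj E r v) (c r v - tau r v) = 0.
  by rewrite sumrB -val /flow_value subrr.
by apply: (psumr_eq0P _ slack0) v arv => v' arv'; rewrite subr_ge0 cap.
Qed.
End FlowFacts.

Section Network.
Variable m : nat.
Local Notation U i := (inl (inr i) : vtx m).
Local Notation nadj := (adj (@net_edge m)).

(* The vertex w_ij = w_ji for i <> j (an arbitrary vertex when i = j). *)
Definition wv (i j : 'I_m) : vtx m :=
  if insub (i, j) is Some w then inr w
  else if insub (j, i) is Some w then inr w else snk m.

Definition other (i : 'I_m) (w : Wt m) : 'I_m :=
  if i == (sval w).1 then (sval w).2 else (sval w).1.

Lemma wv_lt (i j : 'I_m) (hij : (i < j)%N) : wv i j = inr (exist _ (i, j) hij).
Proof. by rewrite /wv insubT. Qed.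

Lemma wv_gt (i j : 'I_m) (hji : (j < i)%N) : wv i j = inr (exist _ (j, i) hji).
Proof. by rewrite /wv insubF ?insubT //= ltnNge ltnW. Qed.

Lemma vtx_sum (Z : nmodType) (P : pred (vtx m)) (F : vtx m -> Z) :
  \sum_(v | P v) F v =
  \sum_(b | P (inl (inl b))) F (inl (inl b)) + \sum_(i | P (U i)) F (U i)
  + \sum_(w | P (inr w)) F (inr w).
Proof. by rewrite !big_sumType. Qed.

(* The pair vertices adjacent to u_i are exactly the w_ij, j <> i, and
   j is recovered as [other i w]. *)
Lemma other_neq i w : nadj (U i) (inr w) -> other i w != i.
Proof.
case: w => [[a b] /= hab]; rewrite /adj /other /= orbF.
by case: eqP => [-> _|_ /eqP ->]; rewrite neq_ltn hab ?orbT.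
Qed.

Lemma wv_other i w : nadj (U i) (inr w) -> wv i (other i w) = inr w.
Proof.
case: w => [[a b] /= hab]; rewrite /adj /other /= orbF.
by case: eqP => [-> _|_ /eqP ->]; [exact: wv_lt | exact: wv_gt].
Qed.

Lemma adj_wv i j : j != i ->
  exists w, [/\ wv i j = inr w, nadj (U i) (inr w) & other i w = j].
Proof.
rewrite neq_ltn => /orP[hji|hij].
  exists (exist _ (j, i) hji); rewrite wv_gt /adj /other /= eqxx orbT.
  by rewrite (_ : i == j = false) //; exact: gtn_eqF.
by exists (exist _ (i, j) hij); rewrite wv_lt /adj /other /= !eqxx.
Qed.

Lemma sum_adj_src (Z : nmodType) (F : vtx m -> Z) :
  \sum_(v | nadj (src m) v) F v = \sum_i F (U i).
Proof.
rewrite vtx_sum [X in X + _ + _]big_pred0; last by case.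
by rewrite [X in _ + X]big_pred0 // add0r addr0.
Qed.

Lemma sum_adj_U (Z : nmodType) i (F : vtx m -> Z) :
  \sum_(v | nadj (U i) v) F v =
  F (src m) + F (snk m) + \sum_(j | j != i) F (wv i j).
Proof.
rewrite vtx_sum big_mkcond big_bool /= big_pred0 // addr0; congr (_ + _).
rewrite (partition_big (other i) (fun j => j != i)); last exact: other_neq.
apply: eq_bigr => j /adj_wv[w0 [-> adj0 oth0]].
rewrite (big_pred1 w0) // => w; apply/andP/eqP => [[aw /eqP oth]|->]; last first.
  by split; last apply/eqP.
suff : (inr w : vtx m) = inr w0 by case.
by rewrite -(wv_other aw) -(wv_other adj0) oth oth0.
Qed.

Lemma sum_adj_W (Z : nmodType) (w : Wt m) (F : vtx m -> Z) :
  \sum_(v | nadj (inr w) v) F v =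
  F (snk m) + F (U (sval w).1) + F (U (sval w).2).
Proof.
case: w => [[a b] /= hab]; rewrite vtx_sum big_mkcond big_bool /= add0r.
rewrite [X in _ + X]big_pred0 // addr0 -addrA (bigD1 a) /=; last by rewrite /adj /= eqxx.
congr (_ + (_ + _)); apply: big_pred1 => k; rewrite /adj /=.
case: (eqVneq k a) => [->|_]; last by rewrite andbT.
by apply/esym/negbTE; rewrite neq_ltn hab.
Qed.
End Network.

Local Notation U i := (inl (inr i) : vtx _).

Section MaxFlow.
Variables (R : realFieldType) (m : nat) (f lam0 : 'I_m -> R) (lam : 'I_m -> 'I_m -> R).
Local Notation c := (net_cap f lam0 lam).
Variable tau : vtx m -> vtx m -> R.
Hypothesis tau_flow : is_flow (@net_edge m) c (src m) (snk m) tau.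

Lemma source_edges_saturated :
  flow_value (@net_edge m) (src m) tau = \sum_i `|f i| ->
  forall i, tau (src m) (U i) = `|f i|.
Proof.
move=> val i; apply: (flow_saturates_source tau_flow) => //.
by rewrite val sum_adj_src.
Qed.

Lemma balance_at_U i : tau (src m) (U i) =
  tau (U i) (snk m) + \sum_(j | j != i) tau (U i) (wv i j).
Proof.
case: tau_flow => skew _ cons; have := cons (U i) isT isT.
by rewrite sum_adj_U (skew (U i) (src m) isT) => ?; lra.
Qed.

Lemma sink_edge_bounds i : 0 <= tau (U i) (snk m) <= lam0 i.
Proof.
case: tau_flow => _ cap _.
by rewrite -oppr0 (flow_ge_opp_cap tau_flow (_ : adj _ (U i) (snk m))) ?cap.
Qed.

(* The flows into w_ij are nonnegative and, by conservation at w_ij and the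
   capacity of (w_ij,s), add up to at most lam_ij. *)
Lemma pair_edge_bounds (i j : 'I_m) : (i < j)%N ->
  [/\ 0 <= tau (U i) (wv i j), 0 <= tau (U j) (wv j i)
    & tau (U i) (wv i j) + tau (U j) (wv j i) <= lam i j].
Proof.
move=> hij; rewrite wv_lt wv_gt; set w := exist _ (i, j) hij.
case: tau_flow => skew cap cons.
have adj_i : adj (@net_edge m) (U i) (inr w) by rewrite /adj /= eqxx.
have adj_j : adj (@net_edge m) (U j) (inr w) by rewrite /adj /= eqxx orbT.
have out_s : tau (inr w) (snk m) <= lam i j := cap (inr w) (snk m) isT.
have back_i : tau (inr w) (U i) <= 0 := cap _ _ (adj_sym adj_i).
have back_j : tau (inr w) (U j) <= 0 := cap _ _ (adj_sym adj_j).
have := cons (inr w) isT isT; rewrite sum_adj_W (skew _ _ adj_i) (skew _ _ adj_j) /=.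
by move=> ?; split; lra.
Qed.
End MaxFlow.

Lemma norm_sgM_le (R : numDomainType) (x y : R) : 0 <= y -> `|Num.sg x * y| <= y.
Proof.
move=> y0; rewrite normrM normr_sg ger0_norm //.
by case: (x != 0); rewrite ?mul1r ?mul0r.
Qed.

Theorem lemma2 (R : realType) (m : nat) (f lam0 : 'I_m -> R)
  (lam : 'I_m -> 'I_m -> R) :
  (0 < m)%N ->
  (forall i, 0 <= lam0 i) ->
  (forall i j : 'I_m, (i < j)%N -> lam i j = lam j i /\ 0 <= lam i j) ->
  is_max_flow_value (@net_edge m) (net_cap f lam0 lam) (src m) (snk m)
    (\sum_(i < m) `|f i|) ->
  exists (xi0 : 'I_m -> R) (xi : 'I_m -> 'I_m -> R),
    [/\ (forall i, - lam0 i <= xi0 i <= lam0 i),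
        (forall i j : 'I_m, (i < j)%N ->
           [/\ - lam i j <= xi i j <= lam i j,
               - lam i j <= xi j i <= lam i j &
               `|xi i j| + `|xi j i| <= lam i j]) &
        (forall i, f i + xi0 i + \sum_(j < m | j != i) xi i j = 0)].
Proof.
move=> _ _ _ [[tau tau_flow /(source_edges_saturated tau_flow) saturated] _].
pose xi0 i := - (Num.sg (f i) * tau (U i) (snk m)).
pose xi i j := - (Num.sg (f i) * tau (U i) (wv i j)).
exists xi0, xi; split.
- move=> i; have /andP[tau0 tau_le] := sink_edge_bounds tau_flow i.
  by rewrite -ler_norml normrN (le_trans (norm_sgM_le _ tau0)).
- move=> i j hij; have [tau_i tau_j tau_ij] := pair_edge_bounds tau_flow hij.
  have := norm_sgM_le (f i) tau_i; have := norm_sgM_le (f j) tau_j.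
  by rewrite /xi -!ler_norml !normrN; split; lra.
- move=> i; rewrite /xi0 /xi sumrN -mulr_sumr {1}(numEsg (f i)) -saturated.
  by rewrite (balance_at_U tau_flow); ring.
Qed.
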